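(* Let $\mathcal{D}[t]\subset\mathcal{H}\subset\mathcal{D}^\times[t^\times]$ be a rigged Hilbert space with $\mathcal{D}[t]$ complete and reflexive. A sequence $\{\zeta_n\}$ of elements of $\mathcal{D}^\times$ is Bessel-like if and only if $\sum_{k=1}^\infty|\langle\zeta_k,\eta\rangle|^2<\infty$ for every $\eta\in\mathcal{D}$ and the analysis operator $$F:\eta\in\mathcal{D}[t]\mapsto\{\overline{\langle\zeta_k,\eta\rangle}\}\in\ell^2[\|\cdot\|_2]$$ is continuous.
   Context: A rigged Hilbert space $\mathcal{D}[t]\subset\mathcal{H}\subset\mathcal{D}^\times[t^\times]$: $\mathcal{D}$ is a dense subspace of the Hilbert space $\mathcal{H}$ with a locally convex topology $t$ finer than the norm topology, $\mathcal{D}^\times$ is the space of continuous conjugate-linear functionals on $\mathcal{D}[t]$ with the strong dual topology $t^\times=\beta(\mathcal{D}^\times,\mathcal{D})$, $\mathcal{H}\subset\mathcal{D}^\times$, and the duality form $\langle\Phi,\eta\rangle$ (value of $\Phi\in\mathcal{D}^\times$ at $\eta\in\mathcal{D}$) extends the inner product. A sequence $\{\zeta_n\}\subset\mathcal{D}^\times$ is Bessel-like if for every bounded subset $\mathcal{M}$ of $\mathcal{D}[t]$, $\sup_{\eta\in\mathcal{M}}\sum_{k=1}^\infty|\langle\zeta_k,\eta\rangle|^2<\infty$. *)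

From HB Require Import structures.
From mathcomp Require Import all_boot all_order all_algebra.
From mathcomp Require Import all_classical all_reals all_analysis.
From mathcomp.real_closed Require Import complex.
Set Implicit Arguments. Unset Strict Implicit. Unset Printing Implicit Defensive.
Import Order.TTheory GRing.Theory Num.Theory.
Import numFieldNormedType.Exports.
Local Open Scope classical_set_scope.
Local Open Scope ring_scope.

Section RiggedDefs.
Context {R : realType}.
Local Notation C := (R[i]).

Section LCS.
Context {D : tvsType C}.

Definition tvs_bounded (M : set D) : Prop :=
  forall U : set D, nbhs (0 : D) U ->
    exists r : C, 0 < r /\
      forall l : C, r <= `|l| -> M `<=` [set l *: u | u in U].

Definition complete_space : Prop :=
  forall F : set_system D, ProperFilter F -> cauchy F -> exists l : D, F --> l.

(** continuous conjugate-linear functionals: the elements of D^x *)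
Definition conj_dual (f : D -> C) : Prop :=
  (forall (a : C) (x y : D), f (a *: x + y) = a^* * f x + f y) /\ continuous (f : D -> C^o).

Definition lin_dual (f : D -> C) : Prop :=
  (forall (a : C) (x y : D), f (a *: x + y) = a * f x + f y) /\ continuous (f : D -> C^o).

(** a linear functional phi on D' is continuous for the strong topology
    beta(D',D) (generated by the seminorms p_M(f) = sup_{x in M} |f x|,
    M bounded): |phi f| <= c p_M(f) for one bounded M *)
Definition strong_dual_continuous (phi : (D -> C) -> C) : Prop :=
  exists M : set D, tvs_bounded M /\ exists c : C, 0 <= c /\
    forall f : D -> C, lin_dual f ->
      forall b : C, 0 <= b -> (forall x, M x -> `|f x| <= b) ->
        `|phi f| <= c * b.

Definition dual_linear (phi : (D -> C) -> C) : Prop :=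
  forall (a : C) (f g : D -> C), lin_dual f -> lin_dual g ->
    phi (fun x => a * f x + g x) = a * phi f + phi g.

Definition strong_bounded (B : set (D -> C)) : Prop :=
  B `<=` lin_dual /\
  forall M : set D, tvs_bounded M ->
    exists c : C, forall f x, B f -> M x -> `|f x| <= c.

(** D[t] is reflexive: the canonical map J : D -> (D'_beta)'_beta is onto
    (every strongly continuous linear functional on D' is an evaluation)
    and a topological isomorphism onto its image, i.e. the topology of D is
    the topology of uniform convergence on strongly bounded subsets of D'. *)
Definition tvs_reflexive : Prop :=
  [/\ (forall phi, dual_linear phi -> strong_dual_continuous phi ->
         exists x : D, forall f, lin_dual f -> phi f = f x),
      (forall U : set D, nbhs (0 : D) U ->
         exists B, strong_bounded B /\ exists e : C, 0 < e /\
           [set x | forall f, B f -> `|f x| <= e] `<=` U) &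
      (forall B, strong_bounded B ->
         nbhs (0 : D) [set x | forall f, B f -> `|f x| <= 1])].

End LCS.

Definition inner_product {H : normedModType C} (ip : H -> H -> C) : Prop :=
  [/\ (forall (a : C) (x y z : H), ip (a *: x + y) z = a * ip x z + ip y z),
      (forall x y : H, ip y x = (ip x y)^*) &
      (forall x : H, `|x| ^+ 2 = ip x x)].

(** D[t] ⊂ H ⊂ D^x[t^x] is a rigged Hilbert space: D is (via the linear
    injection j) a dense subspace of the Hilbert space H, and t is finer than
    the norm topology (j is continuous).  The inclusion H ⊂ D^x is
    h |-> <h, .> := ip h (j .), so that the duality extends the inner product. *)
Definition rigged_hilbert_space {D : tvsType C} {H : completeNormedModType C}
    (ip : H -> H -> C) (j : D -> H) : Prop :=
  [/\ inner_product ip,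
      (forall (a : C) (x y : D), j (a *: x + y) = a *: j x + j y),
      injective j, continuous j &
      closure (range j) = setT].

(** partial sums of sum_k |<zeta_k, x>|^2 ; convergence of this series of
    nonnegative terms = boundedness of its partial sums *)
Definition sq_partial (D : Type) (zeta : nat -> D -> C) (x : D) (n : nat) : C :=
  \sum_(k < n) `|zeta k x| ^+ 2.

Definition bessel_like {D : tvsType C} (zeta : nat -> D -> C) : Prop :=
  forall M : set D, tvs_bounded M ->
    exists c : C, forall x n, M x -> sq_partial zeta x n <= c.

Definition analysis_op_continuous {D : tvsType C} (zeta : nat -> D -> C) : Prop :=
  forall (x : D) (e : C), 0 < e ->
    \forall y \near x, forall n,
      \sum_(k < n) `|(zeta k y)^* - (zeta k x)^*| ^+ 2 <= e.

End RiggedDefs.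

From HB Require Import structures.
From mathcomp Require Import all_boot all_order all_algebra.
From mathcomp Require Import all_classical all_reals all_analysis.
From mathcomp.real_closed Require Import complex.
Import Order.TTheory GRing.Theory Num.Theory.
Import numFieldNormedType.Exports.
Local Open Scope classical_set_scope.
Local Open Scope ring_scope.

(* If F is continuous, the preimage of the unit ball of l^2 is a neighbourhood
   of 0, which absorbs every bounded set, so the partial sums are uniformly
   bounded on it.  Conversely, for a Bessel-like sequence the functionals
   x |-> sum_k a_k conj <zeta_k, x> with ||a||_2^2 <= K form a strongly bounded
   subset of D' (by 2|ab| <= |a|^2 + |b|^2), so by reflexivity their polar is a
   neighbourhood of 0; testing the polar with a_k proportional to <zeta_k, z>
   bounds sum_k |<zeta_k, z>|^2 there, which is continuity of F at 0, hence
   everywhere by conjugate-linearity. *)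

Section BesselLike.
Variable R : realType.
Local Notation C := (R[i]).

Lemma tvs_bounded_set1 (D : tvsType C) (x : D) : @tvs_bounded R D [set x].
Proof.
move=> U U0.
have /= := scale_continuous ((0 : C), x) U.
rewrite scale0r => /(_ U0)[] /= B [/nbhs_ballP[d /= d0 hd] Bx] BU.
exists (2 / d); split; first by rewrite divr_gt0.
move=> l hl y ->.
have l0 : l != 0.
  by apply: contraTneq hl => ->; rewrite normr0 lt_geF // divr_gt0.
exists (l^-1 *: x); last by rewrite scalerA divff // scale1r.
apply: (BU (l^-1, x)); split => /=; last exact: nbhs_singleton.
apply: hd; rewrite -ball_normE /= sub0r normrN normrV ?unitfE //.
rewrite invf_plt ?posrE ?normr_gt0 //.
by apply: lt_le_trans hl; rewrite ltr_pMl ?invr_gt0 // ltr1n.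
Qed.

Section ConjDual.
Context {D : tvsType C} {f : D -> C} (hf : @conj_dual R D f).

Lemma conj_dual0 : f 0 = 0.
Proof.
have := hf.1 1 0 0; rewrite scale1r addr0 rmorph1 mul1r.
by move=> h; apply: (addIr (f 0)); rewrite add0r -h.
Qed.

Lemma conj_dualZ a x : f (a *: x) = a^* * f x.
Proof. by have := hf.1 a x 0; rewrite addr0 conj_dual0 addr0. Qed.

Lemma conj_dualB x y : f (y - x) = f y - f x.
Proof.
have := hf.1 (-1) x y; rewrite scaleN1r addrC => ->.
by rewrite rmorphN1 mulN1r addrC.
Qed.

End ConjDual.

Lemma conjC_continuous : continuous (fun z : C^o => (z^* : C^o)).
Proof.
move=> z A /nbhs_ballP[d /= d0 hd]; apply/nbhs_ballP; exists d => //= y.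
rewrite -!ball_normE /= => hy; apply: hd; rewrite -ball_normE /=.
by rewrite -rmorphB norm_conjC.
Qed.

Section AnalysisOperator.
Variables (D : tvsType C) (zeta : nat -> D -> C).
Hypothesis zeta_conj_dual : forall k, @conj_dual R D (zeta k).

Lemma analysis_op_continuous_bessel_like :
  analysis_op_continuous zeta -> bessel_like zeta.
Proof.
move=> hc M Mb.
have [r [r0 hr]] := Mb _ (hc 0 1 ltr01).
exists (r ^+ 2) => x n /(hr r); rewrite gtr0_norm // lexx => /(_ isT)[u Uu <-].
rewrite /sq_partial.
under eq_bigr => k _ do
  rewrite (conj_dualZ (zeta_conj_dual k)) normrM norm_conjC exprMn (gtr0_norm r0).
rewrite -mulr_sumr; apply: ler_piMr; first by rewrite exprn_ge0 // ltW.
move: (Uu n); under eq_bigr => k _ do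
  rewrite (conj_dual0 (zeta_conj_dual k)) conjC0 subr0 norm_conjC.
by [].
Qed.

Lemma lin_dual_sum_conj n (a : nat -> C) :
  @lin_dual R D (fun x => \sum_(k < n) a k * (zeta k x)^*).
Proof.
split.
  move=> b x y; rewrite mulr_sumr -big_split /=; apply: eq_bigr => k _.
  by rewrite (zeta_conj_dual k).1 rmorphD rmorphM /= conjCK mulrDr mulrCA.
move=> x; elim: n => [|n IH].
  by under eq_fun do rewrite big_ord0; exact: cst_continuous.
under eq_fun do rewrite big_ord_recr /=.
apply: (@continuousD C C^o D (fun x : D => \sum_(i < n) a i * (zeta i x)^*)
   (fun x : D => a n * (zeta n x)^* : C^o)) => //.
apply: (@continuousM _ _ (fun=> a n) (fun x => (zeta n x)^*)).
  exact: cst_continuous.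
exact: continuous_comp ((zeta_conj_dual n).2 x) (conjC_continuous _).
Qed.

Definition synthesis_ball (K : C) : set (D -> C) :=
  fun f => exists n (a : nat -> C), \sum_(k < n) `|a k| ^+ 2 <= K /\
    f = fun x => \sum_(k < n) a k * (zeta k x)^*.

Lemma bessel_like_synthesis_ball_strong_bounded K :
  bessel_like zeta -> @strong_bounded R D (synthesis_ball K).
Proof.
move=> hb; split; first by move=> f [n [a [_ ->]]]; exact: lin_dual_sum_conj.
move=> M Mb; have [c hc] := hb M Mb; exists ((K + c) / 2).
move=> f x [n [a [ha ->]]] Mx; apply: le_trans (ler_norm_sum _ _ _) _.
apply: (@le_trans _ _ (\sum_(k < n) ((`|a k| ^+ 2 + `|zeta k x| ^+ 2) / 2))).
  apply: ler_sum => k _; rewrite normrM norm_conjC.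
  exact: (real_leif_mean_square (normr_real _) (normr_real _)).1.
rewrite -mulr_suml big_split /= ler_pM2r ?invr_gt0 ?ltr0n //.
exact: lerD ha (hc x n Mx).
Qed.

Lemma sq_partial_le_of_polar (e : C) (z : D) n :
  0 < e -> (forall f, synthesis_ball (4 / e) f -> `|f z| <= 1) ->
  sq_partial zeta z n <= e.
Proof.
move=> e0 hpolar; set S := sq_partial zeta z n.
have S0 : 0 <= S by apply: sumr_ge0 => k _; exact: exprn_ge0.
have [//|eS] := real_leP (ger0_real S0) (gtr0_real e0).
have S_gt0 : 0 < S by exact: lt_trans eS.
(* a_k = 2 <zeta_k, z> / S has ||a||^2 = 4 / S < 4 / e and pairs with z to 2 *)
pose a k := 2 / S * zeta k z.
have pair_z : \sum_(k < n) a k * (zeta k z)^* = 2.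
  under eq_bigr => k _ do rewrite -mulrA -normCK.
  by rewrite -mulr_sumr -/(sq_partial zeta z n) -/S mulfVK // gt_eqF.
have : `|\sum_(k < n) a k * (zeta k z)^*| <= 1.
  apply: (hpolar (fun x => \sum_(k < n) a k * (zeta k x)^*)).
  exists n, a; split => //.
  under eq_bigr => k _ do rewrite normrM exprMn.
  rewrite -mulr_sumr -/(sq_partial zeta z n) -/S.
  rewrite ger0_norm ?divr_ge0 ?ler0n ?(ltW S_gt0) // expr2 -mulrA divfK ?gt_eqF //.
  rewrite mulrAC -natrM; change ((4 : C) * S^-1 <= 4 * e^-1).
  by rewrite ler_pM2l ?ltr0n // lef_pV2 ?posrE // ltW.
by rewrite pair_z normr_nat lt_geF // ltr1n.
Qed.

Lemma bessel_like_sq_partial_bounded :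
  bessel_like zeta -> forall x : D, exists c : C, forall n, sq_partial zeta x n <= c.
Proof.
by move=> hb x; have [c hc] := hb _ (tvs_bounded_set1 _ x); exists c => n; exact: hc.
Qed.

Lemma bessel_like_analysis_op_continuous :
  @tvs_reflexive R D -> bessel_like zeta -> analysis_op_continuous zeta.
Proof.
move=> [_ _ polar_nbhs] hb x e e0.
have polar0 := polar_nbhs _ (bessel_like_synthesis_ball_strong_bounded (4 / e) hb).
apply: filterS (nbhsT x polar0) => y [z hz <-] n.
have shift k : `|(zeta k (x + z))^* - (zeta k x)^*| = `|zeta k z|.
  by rewrite -rmorphB -(conj_dualB (zeta_conj_dual k)) addrAC subrr add0r norm_conjC.
under eq_bigr => k _ do rewrite shift.
exact: (sq_partial_le_of_polar _ _ n e0 hz).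
Qed.

End AnalysisOperator.
End BesselLike.

Theorem proposition2p11 (R : realType) (D : tvsType R[i])
    (H : completeNormedModType R[i]) (ip : H -> H -> R[i]) (j : D -> H)
    (zeta : nat -> D -> R[i]) :
  rigged_hilbert_space ip j ->
  @complete_space R D ->
  @tvs_reflexive R D ->
  (forall k, conj_dual (zeta k)) ->
  (bessel_like zeta <->
     ((forall x : D, exists c : R[i], forall n, sq_partial zeta x n <= c) /\
      analysis_op_continuous zeta)).
Proof.
move=> _ _ hrefl hzeta; split.
  move=> hb; split; first exact: bessel_like_sq_partial_bounded.
  exact: bessel_like_analysis_op_continuous.
by move=> [_ hc]; exact: analysis_op_continuous_bessel_like.
Qed.
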